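(* For any $a\in(0,1)$ and any $x\in(\frac12,1]$, there exists $\boldsymbol{\mu}=(\mu_1,\mu_2)\in\Lambda$ such that (i) $\mu_1>\mu_2$ and $\mu_1+\mu_2\ge 1$, (ii) $\lambda(x,\boldsymbol{\mu})=a$, and (iii) $x^\star(\boldsymbol{\mu})<\left(\frac12+x\right)/2$.
   Context: Two-armed bandit with Bernoulli rewards; an instance is $\boldsymbol{\mu}=(\mu_1,\mu_2)$, the means of the two arms, and $\Lambda=\{\boldsymbol{\mu}\in(0,1)^2:\mu_1\neq\mu_2\}$. For $p,q\in(0,1)$ let $d(p,q)=p\log\frac{p}{q}+(1-p)\log\frac{1-p}{1-q}$ be the Bernoulli Kullback–Leibler divergence. For $x\in[0,1]$ define $g(x,\boldsymbol{\mu})=\inf_{\lambda\in(0,1)}\big[(1-x)d(\lambda,\mu_1)+x\,d(\lambda,\mu_2)\big]$; equivalently $g(x,\boldsymbol{\mu})=-\log\big((1-\mu_1)^{1-x}(1-\mu_2)^x+\mu_1^{1-x}\mu_2^x\big)$. Let $\lambda(x,\boldsymbol{\mu})$ be the minimizer $\lambda$ in this infimum, and $x^\star(\boldsymbol{\mu})=\arg\max_{x\in(0,1)}g(x,\boldsymbol{\mu})$. *)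

From Stdlib Require Import Reals ClassicalEpsilon.
From Coquelicot Require Import Coquelicot.
Open Scope R_scope.

Definition kl (p q : R) : R :=
  p * ln (p / q) + (1 - p) * ln ((1 - p) / (1 - q)).

Definition gobj (x mu1 mu2 l : R) : R :=
  (1 - x) * kl l mu1 + x * kl l mu2.

Definition g (x mu1 mu2 : R) : R :=
  real (Glb_Rbar (fun y => exists l, 0 < l < 1 /\ y = gobj x mu1 mu2 l)).

Definition is_lam_min (x mu1 mu2 l : R) : Prop :=
  0 < l < 1 /\ forall l', 0 < l' < 1 -> gobj x mu1 mu2 l <= gobj x mu1 mu2 l'.

Definition lam (x mu1 mu2 : R) : R :=
  epsilon (inhabits 0) (is_lam_min x mu1 mu2).

Definition is_xstar (mu1 mu2 x : R) : Prop :=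
  0 < x < 1 /\ forall y, 0 < y < 1 -> g y mu1 mu2 <= g x mu1 mu2.

Definition xstar (mu1 mu2 : R) : R :=
  epsilon (inhabits 0) (is_xstar mu1 mu2).

Definition inLambda (mu1 mu2 : R) : Prop :=
  0 < mu1 < 1 /\ 0 < mu2 < 1 /\ mu1 <> mu2.

From Stdlib Require Import Reals Lra Psatz ClassicalEpsilon.
From Coquelicot Require Import Coquelicot.
Open Scope R_scope.

(* Gibbs' inequality turns the infimum defining [g] into [g y = - ln Z y], where
   [Z y = mu1^(1-y) mu2^y + (1-mu1)^(1-y) (1-mu2)^y], attained exactly at the tilted mean
   [lam y = mu1^(1-y) mu2^y / Z y].  With [s = ln ((1-mu2)/(1-mu1))] and [t = ln (mu1/mu2)]
   one has [Z y = mu1 e^(-t y) + (1-mu1) e^(s y)], a strictly convex function with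
   [Z'(0) = - d(mu1, mu2) < 0]; so [x* < c] as soon as [Z'(c) > 0], and [mu1 + mu2 >= 1]
   amounts to [t <= s].  For [a < 1/2] the symmetric instance [s = t] (where [x* = 1/2])
   can be tuned to [lam x = a].  For [a >= 1/2] fix [s = ln (c/(1-c))]: two one-variable
   convexity estimates give [Z'(c) > 0] for every [t > 0], and [t] in [(0, s]] with
   [lam x = a] comes from the intermediate value theorem. *)

Lemma epsilon_unique {A : Type} (i : inhabited A) (P : A -> Prop) (a : A) :
  P a -> (forall b, P b -> b = a) -> epsilon i P = a.
Proof. intros Ha Huniq. apply Huniq, epsilon_spec. now exists a. Qed.

Lemma ln_lt_sub1 z : 0 < z -> z <> 1 -> ln z < z - 1.
Proof.
  intros Hz H1. pose proof (exp_ineq1 _ (ln_neq_0 z H1 Hz)) as H.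
  rewrite exp_ln in H; lra.
Qed.

Lemma mul_ln_ratio_lt u v : 0 < u -> 0 < v -> u <> v -> u * (ln v - ln u) < v - u.
Proof.
  intros Hu Hv Hne. rewrite <- ln_div by lra.
  replace (v - u) with (u * (v / u - 1)) by (field; lra).
  apply Rmult_lt_compat_l; [lra|]. apply ln_lt_sub1.
  - apply Rdiv_lt_0_compat; lra.
  - intros E. apply Hne. assert (v = v / u * u) by (field; lra). rewrite E in H. lra.
Qed.

Lemma kl_expand l p : 0 < l < 1 -> 0 < p < 1 ->
  kl l p = l * (ln l - ln p) + (1 - l) * (ln (1 - l) - ln (1 - p)).
Proof. intros Hl Hp. unfold kl. rewrite !ln_div by lra. ring. Qed.

Lemma kl_self p : 0 < p < 1 -> kl p p = 0.
Proof. intros Hp. rewrite kl_expand by lra. ring. Qed.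

Lemma kl_pos l p : 0 < l < 1 -> 0 < p < 1 -> l <> p -> 0 < kl l p.
Proof.
  intros Hl Hp Hne. rewrite kl_expand by lra.
  pose proof (mul_ln_ratio_lt l p ltac:(lra) ltac:(lra) Hne).
  pose proof (mul_ln_ratio_lt (1 - l) (1 - p) ltac:(lra) ltac:(lra) ltac:(lra)).
  lra.
Qed.

Lemma kl_nonneg l p : 0 < l < 1 -> 0 < p < 1 -> 0 <= kl l p.
Proof.
  intros Hl Hp. destruct (Req_dec l p) as [-> | Hne].
  - rewrite kl_self; lra.
  - left; now apply kl_pos.
Qed.

Definition geo_mean (y p q : R) : R := exp ((1 - y) * ln p + y * ln q).

Definition partition_fn (y m1 m2 : R) : R :=
  geo_mean y m1 m2 + geo_mean y (1 - m1) (1 - m2).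

Definition tilted_mean (y m1 m2 : R) : R := geo_mean y m1 m2 / partition_fn y m1 m2.

Lemma partition_fn_pos y m1 m2 : 0 < partition_fn y m1 m2.
Proof.
  unfold partition_fn, geo_mean.
  pose proof (exp_pos ((1 - y) * ln m1 + y * ln m2)).
  pose proof (exp_pos ((1 - y) * ln (1 - m1) + y * ln (1 - m2))). lra.
Qed.

Lemma tilted_mean_bounds y m1 m2 : 0 < tilted_mean y m1 m2 < 1.
Proof.
  unfold tilted_mean. pose proof (partition_fn_pos y m1 m2) as HS.
  assert (HP : 0 < geo_mean y m1 m2) by apply exp_pos.
  assert (HQ : 0 < geo_mean y (1 - m1) (1 - m2)) by apply exp_pos.
  split; [now apply Rdiv_lt_0_compat|].
  apply Rmult_lt_reg_r with (partition_fn y m1 m2); [lra|].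
  unfold partition_fn in *. field_simplify; lra.
Qed.

Lemma gobj_decomp y m1 m2 l : 0 < m1 < 1 -> 0 < m2 < 1 -> 0 < l < 1 ->
  gobj y m1 m2 l = kl l (tilted_mean y m1 m2) - ln (partition_fn y m1 m2).
Proof.
  intros Hm1 Hm2 Hl.
  pose proof (partition_fn_pos y m1 m2) as HS.
  assert (HP : 0 < geo_mean y m1 m2) by apply exp_pos.
  assert (HQ : 0 < geo_mean y (1 - m1) (1 - m2)) by apply exp_pos.
  assert (Hcompl : 1 - tilted_mean y m1 m2
                   = geo_mean y (1 - m1) (1 - m2) / partition_fn y m1 m2)
    by (unfold tilted_mean, partition_fn in *; field; lra).
  rewrite kl_expand by (auto using tilted_mean_bounds).
  rewrite Hcompl. unfold tilted_mean, gobj. rewrite !ln_div, !kl_expand by lra.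
  unfold geo_mean. rewrite !ln_exp. ring.
Qed.

Lemma lam_eq y m1 m2 : 0 < m1 < 1 -> 0 < m2 < 1 -> lam y m1 m2 = tilted_mean y m1 m2.
Proof.
  intros Hm1 Hm2. pose proof (tilted_mean_bounds y m1 m2) as Hb.
  unfold lam. apply epsilon_unique.
  - split; [exact Hb|]. intros l Hl. rewrite !gobj_decomp, kl_self by auto.
    pose proof (kl_nonneg l _ Hl Hb). lra.
  - intros l [Hl Hmin]. specialize (Hmin _ Hb). rewrite !gobj_decomp, kl_self in Hmin by auto.
    destruct (Req_dec l (tilted_mean y m1 m2)) as [| Hne]; [assumption|].
    pose proof (kl_pos _ _ Hl Hb Hne). lra.
Qed.

Lemma g_eq y m1 m2 : 0 < m1 < 1 -> 0 < m2 < 1 -> g y m1 m2 = - ln (partition_fn y m1 m2).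
Proof.
  intros Hm1 Hm2. pose proof (tilted_mean_bounds y m1 m2) as Hb. unfold g.
  rewrite (is_glb_Rbar_unique _ (Finite (- ln (partition_fn y m1 m2)))); [reflexivity|].
  split.
  - intros v [l [Hl ->]]. simpl. rewrite gobj_decomp by auto.
    pose proof (kl_nonneg l _ Hl Hb). lra.
  - intros b Hlow. apply Hlow. exists (tilted_mean y m1 m2). split; [exact Hb|].
    rewrite gobj_decomp, kl_self by auto. ring.
Qed.

Lemma xstar_eq_of_strict_min m1 m2 y0 : 0 < m1 < 1 -> 0 < m2 < 1 -> 0 < y0 < 1 ->
  (forall y, 0 < y < 1 -> y <> y0 -> partition_fn y0 m1 m2 < partition_fn y m1 m2) ->
  xstar m1 m2 = y0.
Proof.
  intros Hm1 Hm2 Hy0 Hmin.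
  assert (Hg : forall y, 0 < y < 1 -> y <> y0 -> g y m1 m2 < g y0 m1 m2).
  { intros y Hy Hne. rewrite !g_eq by auto.
    pose proof (ln_increasing _ _ (partition_fn_pos y0 m1 m2) (Hmin y Hy Hne)). lra. }
  unfold xstar. apply epsilon_unique.
  - split; [exact Hy0|]. intros y Hy.
    destruct (Req_dec y y0) as [-> | Hne]; [lra|]. left; auto.
  - intros y [Hy Hmax]. specialize (Hmax y0 Hy0).
    destruct (Req_dec y y0) as [| Hne]; [assumption|]. specialize (Hg y Hy Hne). lra.
Qed.

Lemma geo_mean_exp y p q : 0 < p -> geo_mean y p q = p * exp (y * (ln q - ln p)).
Proof.
  intros Hp. unfold geo_mean.
  replace ((1 - y) * ln p + y * ln q) with (ln p + y * (ln q - ln p)) by ring.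
  now rewrite exp_plus, exp_ln.
Qed.

(* Both terms lie strictly above their tangents at [y0] ([exp z > 1 + z] for [z <> 0]),
   and the slopes of these tangents cancel. *)
Lemma exp_sum_strict_min A B s t y0 y : 0 < A -> 0 < B -> 0 < s -> 0 < t ->
  A * s * exp (s * y0) = B * t * exp (- (t * y0)) -> y <> y0 ->
  A * exp (s * y0) + B * exp (- (t * y0)) < A * exp (s * y) + B * exp (- (t * y)).
Proof.
  intros HA HB Hs Ht Hcrit Hne.
  assert (E1 : exp (s * y) = exp (s * y0) * exp (s * (y - y0)))
    by (rewrite <- exp_plus; f_equal; ring).
  assert (E2 : exp (- (t * y)) = exp (- (t * y0)) * exp (- (t * (y - y0))))
    by (rewrite <- exp_plus; f_equal; ring).
  assert (I1 : 1 + s * (y - y0) < exp (s * (y - y0))).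
  { apply exp_ineq1. intros Z. apply Rmult_integral in Z. lra. }
  assert (I2 : 1 + - (t * (y - y0)) < exp (- (t * (y - y0)))).
  { apply exp_ineq1. intros Z. assert (Z' : t * (y - y0) = 0) by lra.
    apply Rmult_integral in Z'. lra. }
  pose proof (exp_pos (s * y0)). pose proof (exp_pos (- (t * y0))).
  rewrite E1, E2.
  assert (A * exp (s * y0) * (1 + s * (y - y0)) < A * exp (s * y0) * exp (s * (y - y0)))
    by (apply Rmult_lt_compat_l; nra).
  assert (B * exp (- (t * y0)) * (1 + - (t * (y - y0)))
          < B * exp (- (t * y0)) * exp (- (t * (y - y0))))
    by (apply Rmult_lt_compat_l; nra).
  nra.
Qed.

Lemma exp_sum_critical_point A B s t c : 0 < A -> 0 < B -> 0 < s -> 0 < t ->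
  A * s < B * t -> B * t * exp (- (t * c)) < A * s * exp (s * c) ->
  exists y0, 0 < y0 < c /\ A * s * exp (s * y0) = B * t * exp (- (t * y0)).
Proof.
  intros HA HB Hs Ht H0 Hc.
  set (r := B * t / (A * s)).
  assert (Hr1 : 1 < r).
  { unfold r. apply Rmult_lt_reg_r with (A * s); [nra|]. field_simplify; nra. }
  assert (Hrc : r < exp (c * (s + t))).
  { unfold r. replace (c * (s + t)) with (s * c + t * c) by ring. rewrite exp_plus.
    assert (Hinv : exp (- (t * c)) * exp (t * c) = 1)
      by (rewrite <- exp_plus, <- exp_0; f_equal; ring).
    pose proof (exp_pos (t * c)).
    apply Rmult_lt_reg_r with (A * s); [nra|].
    replace (B * t / (A * s) * (A * s)) with (B * t * (exp (- (t * c)) * exp (t * c)))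
      by (rewrite Hinv; field; split; lra).
    nra. }
  assert (Hln : 0 < ln r < c * (s + t)).
  { split.
    - rewrite <- ln_1. apply ln_increasing; lra.
    - rewrite <- (ln_exp (c * (s + t))). apply ln_increasing; lra. }
  set (y0 := ln r / (s + t)).
  exists y0. split.
  - split; [apply Rdiv_lt_0_compat; lra|].
    apply Rmult_lt_reg_r with (s + t); [lra|]. unfold y0. field_simplify; lra.
  - assert (Hy : exp (s * y0) * exp (t * y0) = r).
    { rewrite <- exp_plus. replace (s * y0 + t * y0) with (ln r) by (unfold y0; field; lra).
      apply exp_ln; lra. }
    assert (Hinv : exp (t * y0) * exp (- (t * y0)) = 1)
      by (rewrite <- exp_plus, <- exp_0; f_equal; ring).
    apply Rmult_eq_reg_r with (exp (t * y0)); [|apply Rgt_not_eq, exp_pos].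
    replace (A * s * exp (s * y0) * exp (t * y0)) with (A * s * (exp (s * y0) * exp (t * y0)))
      by ring.
    replace (B * t * exp (- (t * y0)) * exp (t * y0))
      with (B * t * (exp (t * y0) * exp (- (t * y0)))) by ring.
    rewrite Hy, Hinv. unfold r. field. lra.
Qed.

Section LogRatioCoordinates.

Variables m1 m2 : R.
Hypotheses (Hm1 : 0 < m1 < 1) (Hm2 : 0 < m2 < 1).

Let t := ln m1 - ln m2.
Let s := ln (1 - m2) - ln (1 - m1).

Lemma geo_mean_upper y : geo_mean y m1 m2 = m1 * exp (- (t * y)).
Proof. rewrite geo_mean_exp by lra. f_equal. f_equal. unfold t. ring. Qed.

Lemma geo_mean_lower y : geo_mean y (1 - m1) (1 - m2) = (1 - m1) * exp (s * y).
Proof. rewrite geo_mean_exp by lra. f_equal. f_equal. unfold s. ring. Qed.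

(* The slope of [partition_fn] at [0] is [- kl m1 m2 < 0]. *)
Lemma kl_log_ratio : kl m1 m2 = m1 * t - (1 - m1) * s.
Proof. rewrite kl_expand by lra. unfold s, t. ring. Qed.

Hypothesis Hlt : m2 < m1.

Lemma xstar_lt c : 0 < c <= 1 ->
  m1 * t * exp (- (t * c)) < (1 - m1) * s * exp (s * c) -> xstar m1 m2 < c.
Proof.
  intros Hc Hslope.
  assert (Ht : 0 < t) by (unfold t; pose proof (ln_increasing m2 m1); lra).
  assert (Hs : 0 < s) by (unfold s; pose proof (ln_increasing (1 - m1) (1 - m2)); lra).
  assert (H0 : (1 - m1) * s < m1 * t)
    by (pose proof (kl_pos m1 m2 Hm1 Hm2 ltac:(lra)); rewrite kl_log_ratio in *; lra).
  destruct (exp_sum_critical_point (1 - m1) m1 s t c) as [y0 [Hy0 Hcrit]]; try lra.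
  rewrite (xstar_eq_of_strict_min m1 m2 y0); try lra.
  intros y _ Hne. unfold partition_fn. rewrite !geo_mean_upper, !geo_mean_lower.
  pose proof (exp_sum_strict_min (1 - m1) m1 s t y0 y). lra.
Qed.

End LogRatioCoordinates.

(* In the coordinates [s = ln ((1 - mu2) / (1 - mu1))], [t = ln (mu1 / mu2)], realised by
   [mu1 = mu_of s t] and [mu2 = mu1 * exp (- t)], the equation says [lam x mu = a] and the
   inequality says that [partition_fn] increases at [c]. *)
Definition admissible_params (a x c s t : R) : Prop :=
  0 < t <= s /\
  a * (1 - exp (- t)) * exp (s * x) = (1 - a) * (exp s - 1) * exp (- (t * x)) /\
  (exp s - 1) * t * exp (- (t * c)) < (1 - exp (- t)) * s * exp (s * c).

Definition mu_of (s t : R) : R := (exp s - 1) / (exp s - exp (- t)).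

Lemma instance_of_params a x c s t : 0 < a < 1 -> 0 < c <= 1 -> admissible_params a x c s t ->
  exists mu1 mu2 : R,
    inLambda mu1 mu2 /\ (mu1 > mu2 /\ mu1 + mu2 >= 1) /\
    lam x mu1 mu2 = a /\ xstar mu1 mu2 < c.
Proof.
  intros Ha Hc [Hts [Hlam Hslope]].
  set (E := exp s) in *. set (F := exp (- t)) in *.
  assert (HE : 1 < E) by (unfold E; rewrite <- exp_0; apply exp_increasing; lra).
  assert (HF : 0 < F < 1)
    by (unfold F; split; [apply exp_pos | rewrite <- exp_0; apply exp_increasing; lra]).
  assert (HEF : 1 <= E * F)
    by (unfold E, F; rewrite <- exp_plus; pose proof (exp_ineq1_le (s + - t)); lra).
  set (m1 := mu_of s t). set (m2 := m1 * F).
  assert (Hm1 : 0 < m1 < 1).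
  { unfold m1, mu_of. fold E F. split; [apply Rdiv_lt_0_compat; lra|].
    apply Rmult_lt_reg_r with (E - F); [lra|]. field_simplify; lra. }
  assert (Hm2 : 0 < m2 < m1) by (unfold m2; split; nra).
  assert (H1m1 : 1 - m1 = (1 - F) / (E - F)) by (unfold m1, mu_of; fold E F; field; lra).
  assert (H1m2 : 1 - m2 = (1 - m1) * E)
    by (unfold m2; rewrite H1m1; unfold m1, mu_of; fold E F; field; lra).
  assert (Ht : ln m1 - ln m2 = t)
    by (unfold m2; rewrite ln_mult by lra; unfold F; rewrite ln_exp; ring).
  assert (Hs : ln (1 - m2) - ln (1 - m1) = s)
    by (rewrite H1m2, ln_mult by lra; unfold E; rewrite ln_exp; ring).
  assert (Hm1E : m1 = (E - 1) / (E - F)) by reflexivity.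
  exists m1, m2. split; [|split; [|split]].
  - unfold inLambda. lra.
  - split; [lra|]. apply Rle_ge. unfold m2. rewrite Hm1E.
    apply Rmult_le_reg_r with (E - F); [lra|]. field_simplify; nra.
  - rewrite lam_eq by lra. unfold tilted_mean, partition_fn.
    rewrite geo_mean_upper, geo_mean_lower, Ht, Hs by lra.
    pose proof (exp_pos (- (t * x))). pose proof (exp_pos (s * x)).
    assert (Hodds : (1 - a) * (m1 * exp (- (t * x))) = a * ((1 - m1) * exp (s * x))).
    { rewrite H1m1, Hm1E. apply Rmult_eq_reg_r with (E - F); [|lra]. field_simplify; lra. }
    apply Rmult_eq_reg_r with (m1 * exp (- (t * x)) + (1 - m1) * exp (s * x)); [|nra].
    field_simplify; nra.
  - apply xstar_lt; [lra .. |]. rewrite Ht, Hs, H1m1, Hm1E.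
    apply Rmult_lt_reg_r with (E - F); [lra|]. field_simplify; lra.
Qed.

Lemma pos_of_deriv_pos (f f' : R -> R) v : 0 < v -> f 0 = 0 ->
  (forall u, 0 <= u <= v -> is_derive f u (f' u)) -> (forall u, 0 < u < v -> 0 < f' u) ->
  0 < f v.
Proof.
  intros Hv H0 Hd Hpos.
  destruct (MVT_cor2 f f' 0 v Hv) as [u [Hmvt Hu]].
  { intros u Hu. apply is_derive_Reals, Hd, Hu. }
  specialize (Hpos u Hu). rewrite H0 in Hmvt. nra.
Qed.

Lemma pos_of_deriv2_pos (f f' f'' : R -> R) v : 0 < v -> f 0 = 0 -> f' 0 = 0 ->
  (forall u, 0 <= u <= v -> is_derive f u (f' u)) ->
  (forall u, 0 <= u <= v -> is_derive f' u (f'' u)) ->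
  (forall u, 0 < u < v -> 0 < f'' u) -> 0 < f v.
Proof.
  intros Hv H0 H0' Hd Hd' Hpos.
  apply (pos_of_deriv_pos f f'); auto.
  intros u Hu. apply (pos_of_deriv_pos f' f''); [lra | assumption | |].
  - intros w Hw. apply Hd'. lra.
  - intros w Hw. apply Hpos. lra.
Qed.

Lemma exp_sub1_mul_lt c v : 1/2 < c < 1 -> 0 < v -> exp v <= c / (1 - c) ->
  (exp v - 1) * exp (- (c * v)) < v.
Proof.
  intros Hc Hv Hev.
  replace ((exp v - 1) * exp (- (c * v))) with (exp ((1 - c) * v) - exp (- (c * v)))
    by (replace ((1 - c) * v) with (v + - (c * v)) by ring; rewrite exp_plus; ring).
  set (f := fun w => w - exp ((1 - c) * w) + exp (- (c * w))).
  enough (H : 0 < f v) by (unfold f in H; lra).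
  apply (pos_of_deriv2_pos f
    (fun w => 1 - (1 - c) * exp ((1 - c) * w) - c * exp (- (c * w)))
    (fun w => c * c * exp (- (c * w)) - (1 - c) * (1 - c) * exp ((1 - c) * w))); [lra | | | | |].
  - unfold f. rewrite !Rmult_0_r, Ropp_0, exp_0. ring.
  - rewrite !Rmult_0_r, Ropp_0, exp_0. ring.
  - intros u _. unfold f. auto_derive; auto. ring.
  - intros u _. auto_derive; auto. ring.
  - intros u Hu.
    (* [(1 - c)^2 e^u < (1 - c)^2 c / (1 - c) = c (1 - c) < c^2] *)
    assert (Hsplit : exp ((1 - c) * u) = exp u * exp (- (c * u)))
      by (rewrite <- exp_plus; f_equal; ring).
    assert (Heu : exp u * (1 - c) < c).
    { assert (exp u < exp v) by (apply exp_increasing; lra).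
      apply Rmult_le_compat_r with (r := 1 - c) in Hev; [|lra].
      replace (c / (1 - c) * (1 - c)) with c in Hev by (field; lra). nra. }
    rewrite Hsplit. pose proof (exp_pos (- (c * u))). pose proof (exp_pos u).
    assert (0 < (c * c - (1 - c) * (1 - c) * exp u) * exp (- (c * u)))
      by (apply Rmult_lt_0_compat; nra).
    nra.
Qed.

Lemma lt_one_sub_exp_mul c v : 1/2 < c -> 0 < v -> v < (1 - exp (- v)) * exp (c * v).
Proof.
  intros Hc Hv.
  replace ((1 - exp (- v)) * exp (c * v)) with (exp (c * v) - exp (- ((1 - c) * v)))
    by (replace (- ((1 - c) * v)) with (c * v + - v) by ring; rewrite exp_plus; ring).
  set (f := fun w => exp (c * w) - exp (- ((1 - c) * w)) - w).
  enough (H : 0 < f v) by (unfold f in H; lra).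
  apply (pos_of_deriv2_pos f
    (fun w => c * exp (c * w) + (1 - c) * exp (- ((1 - c) * w)) - 1)
    (fun w => c * c * exp (c * w) - (1 - c) * (1 - c) * exp (- ((1 - c) * w)))); [lra | | | | |].
  - unfold f. rewrite !Rmult_0_r, Ropp_0, exp_0. ring.
  - rewrite !Rmult_0_r, Ropp_0, exp_0. ring.
  - intros u _. unfold f. auto_derive; auto. ring.
  - intros u _. auto_derive; auto. ring.
  - intros u Hu.
    assert (exp (- ((1 - c) * u)) < exp (c * u)) by (apply exp_increasing; nra).
    pose proof (exp_pos (- ((1 - c) * u))). nra.
Qed.

Lemma slope_pos_of_exp_le c s t : 1/2 < c < 1 -> 0 < s -> exp s <= c / (1 - c) -> 0 < t ->
  (exp s - 1) * t * exp (- (t * c)) < (1 - exp (- t)) * s * exp (s * c).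
Proof.
  intros Hc Hs Hes Ht.
  pose proof (exp_sub1_mul_lt c s Hc Hs Hes) as Hleft.
  pose proof (lt_one_sub_exp_mul c t ltac:(lra) Ht) as Hright.
  pose proof (exp_pos (- (c * s))). pose proof (exp_pos (c * t)).
  pose proof (exp_pos (s * c)). pose proof (exp_pos (- (t * c))).
  assert (E1 : exp (- (c * s)) * exp (s * c) = 1)
    by (rewrite <- exp_plus, <- exp_0; f_equal; ring).
  assert (E2 : exp (c * t) * exp (- (t * c)) = 1)
    by (rewrite <- exp_plus, <- exp_0; f_equal; ring).
  assert (P : (exp s - 1) * exp (- (c * s)) * t < s * ((1 - exp (- t)) * exp (c * t))).
  { apply Rle_lt_trans with (s * t); [apply Rmult_le_compat_r |]; nra. }
  apply Rmult_lt_compat_r with (r := exp (s * c) * exp (- (t * c))) in P; [|nra].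
  replace ((exp s - 1) * exp (- (c * s)) * t * (exp (s * c) * exp (- (t * c))))
    with ((exp s - 1) * t * exp (- (t * c)) * (exp (- (c * s)) * exp (s * c))) in P by ring.
  replace (s * ((1 - exp (- t)) * exp (c * t)) * (exp (s * c) * exp (- (t * c))))
    with ((1 - exp (- t)) * s * exp (s * c) * (exp (c * t) * exp (- (t * c)))) in P by ring.
  rewrite E1, E2 in P. lra.
Qed.

Lemma exp_sub1_eq u : exp u - 1 = exp u * (1 - exp (- u)).
Proof.
  assert (Hinv : exp u * exp (- u) = 1) by (rewrite <- exp_plus, <- exp_0; f_equal; ring).
  rewrite Rmult_minus_distr_l, Hinv. ring.
Qed.

Lemma symmetric_params a x c : 0 < a < 1/2 -> 1/2 < x -> 1/2 < c ->
  exists s t, admissible_params a x c s t.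
Proof.
  intros Ha Hx Hc.
  assert (Hodds : 1 < (1 - a) / a)
    by (apply Rmult_lt_reg_r with a; [lra|]; field_simplify; lra).
  set (u := ln ((1 - a) / a) / (2 * x - 1)).
  assert (Hu : 0 < u).
  { apply Rdiv_lt_0_compat; [rewrite <- ln_1; apply ln_increasing |]; lra. }
  assert (H2x : exp (u * (2 * x - 1)) = (1 - a) / a).
  { unfold u. replace (ln ((1 - a) / a) / (2 * x - 1) * (2 * x - 1)) with (ln ((1 - a) / a))
      by (field; lra).
    apply exp_ln; lra. }
  assert (Hux : a * exp (u * x) = (1 - a) * (exp u * exp (- (u * x)))).
  { replace (exp (u * x)) with (exp (u * (2 * x - 1)) * exp u * exp (- (u * x)))
      by (rewrite <- !exp_plus; f_equal; ring).
    rewrite H2x. field. lra. }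
  pose proof (exp_pos u). pose proof (exp_pos (- (u * x))).
  assert (HF : 0 < 1 - exp (- u))
    by (assert (exp (- u) < 1) by (rewrite <- exp_0; apply exp_increasing; lra); lra).
  exists u, u. split; [lra | split].
  - rewrite exp_sub1_eq.
    transitivity ((1 - exp (- u)) * (a * exp (u * x))); [ring | rewrite Hux; ring].
  - rewrite exp_sub1_eq.
    assert (Hshift : exp u * exp (- (u * c)) < exp (u * c))
      by (rewrite <- exp_plus; apply exp_increasing; nra).
    replace (exp u * (1 - exp (- u)) * u * exp (- (u * c)))
      with ((1 - exp (- u)) * u * (exp u * exp (- (u * c)))) by ring.
    apply Rmult_lt_compat_l; nra.
Qed.

Lemma tilted_params a x c : 1/2 <= a < 1 -> 1/2 < x -> 1/2 < c < 1 ->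
  exists s t, admissible_params a x c s t.
Proof.
  intros Ha Hx Hc.
  assert (Hc1 : 1 < c / (1 - c))
    by (apply Rmult_lt_reg_r with (1 - c); [lra|]; field_simplify; lra).
  set (s := ln (c / (1 - c))).
  assert (Hs : 0 < s) by (unfold s; rewrite <- ln_1; apply ln_increasing; lra).
  assert (Hes : exp s = c / (1 - c)) by (apply exp_ln; lra).
  set (G := fun t => a * (1 - exp (- t)) * exp (s * x) - (1 - a) * (exp s - 1) * exp (- (t * x))).
  assert (HG0 : G 0 < 0).
  { unfold G. rewrite Ropp_0, Rmult_0_l, Ropp_0, exp_0. nra. }
  assert (HGs : 0 <= G s).
  { unfold G. rewrite exp_sub1_eq.
    assert (Hshift : exp s * exp (- (s * x)) <= exp (s * x))
      by (rewrite <- exp_plus; left; apply exp_increasing; nra).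
    assert (HF : 0 < 1 - exp (- s))
      by (assert (exp (- s) < 1) by (rewrite <- exp_0; apply exp_increasing; lra); lra).
    pose proof (exp_pos (- (s * x))). pose proof (exp_pos (s * x)).
    assert ((1 - a) * (exp s * exp (- (s * x))) <= a * exp (s * x)) by nra.
    nra. }
  assert (Hcont : continuity G).
  { intros v. apply derivable_continuous_pt. eexists. apply is_derive_Reals.
    unfold G. auto_derive; auto. }
  destruct (IVT_cor G 0 s Hcont ltac:(lra) ltac:(nra)) as [t [Ht HGt]].
  assert (Ht0 : t <> 0) by (intros ->; lra).
  exists s, t. split; [lra | split].
  - unfold G in HGt. lra.
  - apply slope_pos_of_exp_le; lra.
Qed.

Theorem mainTheorem1 :
  forall a x : R, 0 < a < 1 -> 1/2 < x <= 1 ->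
  exists mu1 mu2 : R,
    inLambda mu1 mu2 /\
    (mu1 > mu2 /\ mu1 + mu2 >= 1) /\
    lam x mu1 mu2 = a /\
    xstar mu1 mu2 < (1/2 + x) / 2.
Proof.
  intros a x Ha Hx.
  assert (Hparams : exists s t, admissible_params a x ((1/2 + x) / 2) s t).
  { destruct (Rlt_le_dec a (1/2)).
    - apply symmetric_params; lra.
    - apply tilted_params; lra. }
  destruct Hparams as (s & t & Hst).
  apply (instance_of_params a x _ s t); [lra | lra | exact Hst].
Qed.
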